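(* Let $P$ be a finite set of points in the plane in general position with $|P|$ even, and let $C$ be a connected component of the underlying graph of $P$ with vertex set $V(C)\subseteq P$. Then $|V(C)|$ is even and the underlying graph of the point set $V(C)$ is exactly $C$.
   Context: Points are in general position if no three are collinear. For a finite set $P$ of $n$ points in general position with $n$ even, a halving line of $P$ is a line through two points of $P$ that has exactly $(n-2)/2$ points of $P$ strictly on each side. The underlying graph of $P$ has vertex set $P$, and two points are adjacent if and only if the line through them is a halving line of $P$. *)

From HB Require Import structures.
From mathcomp Require Import all_boot all_order all_algebra.
Set Implicit Arguments. Unset Strict Implicit. Unset Printing Implicit Defensive.
Import Order.TTheory GRing.Theory Num.Theory.

Local Open Scope ring_scope.

Definition point (R : realFieldType) := (R * R)%type.

(* orientation determinant: > 0 iff c is strictly left of the directed line a->b,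
   < 0 iff strictly right, = 0 iff collinear *)
Definition orient (R : realFieldType) (a b c : point R) : R :=
  (b.1 - a.1) * (c.2 - a.2) - (b.2 - a.2) * (c.1 - a.1).

Definition general_position (R : realFieldType) (P : seq (point R)) : Prop :=
  forall a b c, a \in P -> b \in P -> c \in P ->
    a != b -> a != c -> b != c -> orient a b c != 0.

(* the line through a, b in P (a <> b) is a halving line of P:
   exactly (n-2)/2 points of P strictly on each side, n = size P *)
Definition halving_edge (R : realFieldType) (P : seq (point R)) : rel (point R) :=
  fun a b => [&& a \in P, b \in P, a != b,
     count (fun c => 0 < orient a b c) P == ((size P - 2) %/ 2)%N &
     count (fun c => orient a b c < 0) P == ((size P - 2) %/ 2)%N].

Definition reachable (R : realFieldType) (P : seq (point R)) (v w : point R) : Prop :=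
  exists p : seq (point R), path (halving_edge P) v p /\ last v p = w.

From HB Require Import structures.
From mathcomp Require Import all_boot all_order all_algebra.
From mathcomp Require Import ring lra zify.
Import Order.TTheory GRing.Theory Num.Theory.
Set Implicit Arguments. Unset Strict Implicit. Unset Printing Implicit Defensive.
Local Open Scope ring_scope.

(* Let P be in general position with |P| = m + m, and let V be a subset of P
   closed under halving edges (e.g. a connected component).  For a direction u
   in which the points of P have pairwise distinct heights <u, x> ("generic"),
   let top(u) be the set of the m highest points of P and tau(u) the number of
   points of V in top(u).

   1. Perturbing a direction uc (in which only disjoint pairs of points tie,
      by general position), a point leaves top(u) only by swapping with its
      tie partner, and then the two points are the m-th and (m+1)-th along a
      halving line, so both are in V or neither is: tau is unchanged.
      Moving u along a segment of nonzero directions crosses finitely many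
      critical parameters, so tau is constant along it ([top_count_segment]).
   2. top(-u) is the complement of top(u), and u, -u are joined by two such
      segments, so |V| = 2 tau(u) is even ([top_count_half]).
   3. For a, b in V, a direction almost orthogonal to ab puts the left side of
      ab above a and b, which are adjacent in height, and the right side below.
      Comparing top(u) with the sides of ab, with tau(u) = |V|/2, shows that
      ab halves V iff it halves P ([halving_component]). *)

Section Counting.
Variable T : eqType.
Implicit Types (s : seq T) (p q : pred T).

Lemma count_andC p q s :
  count p s = (count (fun x => p x && q x) s + count (fun x => p x && ~~ q x) s)%N.
Proof. by elim: s => //= x s ->; case: (p x); case: (q x) => /=; lia. Qed.

Lemma count_in_sub p q s : {in s, forall x, p x -> q x} ->
  count q s = (count p s + count (fun x => q x && ~~ p x) s)%N.
Proof.
move=> pq; rewrite (count_andC q p); congr (_ + _)%N.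
by apply: eq_in_count => x /pq; case: (p x); case: (q x) => // /(_ isT).
Qed.

Lemma sub_in_count p q s : {in s, forall x, p x -> q x} -> (count p s <= count q s)%N.
Proof. by move=> /count_in_sub ->; apply: leq_addr. Qed.

Lemma sub_in_count_lt p q s : {in s, forall x, p x -> q x} ->
  (exists2 x, x \in s & q x && ~~ p x) -> (count p s < count q s)%N.
Proof.
move=> /count_in_sub -> [x xs qx]; rewrite -[X in (X < _)%N]addn0 ltn_add2l.
by rewrite -has_count; apply/hasP; exists x.
Qed.

Lemma count_neq2 s x y : uniq s -> x \in s -> y \in s -> x != y ->
  count (fun z => (z != x) && (z != y)) s = (size s - 2)%N.
Proof.
move=> us xs ys xy.
have two : count [predU pred1 x & pred1 y] s = 2%N.
  have := count_predUI (pred1 x) (pred1 y) s; rewrite !count_uniq_mem // xs ys.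
  rewrite (@eq_count _ [predI pred1 x & pred1 y] pred0) ?count_pred0 ?addn0 //.
  by move=> z; rewrite !inE; case: (eqVneq z x) => [->|//]; rewrite (negbTE xy).
have := count_predC [predU pred1 x & pred1 y] s; rewrite two.
rewrite (@eq_count _ _ (fun z => (z != x) && (z != y))); first by lia.
by move=> z /=; rewrite negb_or.
Qed.

Lemma count_guard1 s (b : bool) y : uniq s -> y \in s ->
  count (fun z => b && (z == y)) s = b.
Proof.
move=> us ys; case: b; last by elim: s {us ys}.
by have := count_uniq_mem y us; rewrite ys => <-; apply: eq_count.
Qed.

Lemma count_or1 p s y : uniq s -> y \in s -> ~~ p y ->
  count (fun x => p x || (x == y)) s = (count p s).+1.
Proof.
move=> us ys npy; have := count_predUI p (pred1 y) s.
rewrite (@eq_count _ [predI p & pred1 y] pred0) ?count_pred0 => [|x]; last first.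
  by rewrite /= -!topredE /=; case: (eqVneq x y) => [->|]; rewrite ?(negbTE npy) ?andbF.
by rewrite count_uniq_mem // ys addn0 addn1.
Qed.

Lemma mem_size_gt0 s x : x \in s -> (0 < size s)%N.
Proof. by case: s. Qed.

Lemma count_le1 p s : uniq s -> {in s &, forall x y, p x -> p y -> x = y} ->
  (count p s <= 1)%N.
Proof.
move=> us p1; case hp: (has p s); last by rewrite has_count ltnNge in hp; lia.
have [x xs px] := hasP hp; rewrite -size_filter.
apply: (@uniq_leq_size _ _ [:: x]); first exact: filter_uniq.
by move=> y; rewrite mem_filter inE => /andP [py ys]; rewrite (p1 y x).
Qed.

End Counting.

Section Directions.
Variable R : realFieldType.
Implicit Types (u x y z a b : point R).

Definition height u z : R := u.1 * z.1 + u.2 * z.2.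

Definition nonzero u : bool := (u.1 != 0) || (u.2 != 0).

Definition vec x y : point R := (y.1 - x.1, y.2 - x.2).

Lemma sqr_sum_gt0 (s t : R) : (s != 0) || (t != 0) -> 0 < s ^+ 2 + t ^+ 2.
Proof.
have hs := sqr_ge0 s; have ht := sqr_ge0 t.
by case/orP => h; [have := @exprn_even_gt0 _ 2 s isT | have := @exprn_even_gt0 _ 2 t isT];
  rewrite h => ?; lra.
Qed.

Lemma vec_nonzero x y : x != y -> nonzero (vec x y).
Proof.
case: x => x1 x2; case: y => y1 y2; rewrite /nonzero /= xpair_eqE !subr_eq0.
by rewrite negb_and eq_sym [y2 == _]eq_sym.
Qed.

Lemma orient_first x y : orient x y x = 0. Proof. rewrite /orient; ring. Qed.
Lemma orient_second x y : orient x y y = 0. Proof. rewrite /orient; ring. Qed.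
Lemma orient_swap x y z : orient y x z = - orient x y z. Proof. rewrite /orient; ring. Qed.

(* When x and y have the same height in direction u, the line xy is orthogonal
   to u, so the orientation with respect to xy is a nonzero multiple of the
   height relative to x. *)
Lemma tie_orient u x y : nonzero u -> x != y -> height u y = height u x ->
  exists2 s : R, s != 0 & forall z, s * orient x y z = height u z - height u x.
Proof.
move=> hu xy tie.
set K := (y.1 - x.1) * u.2 - (y.2 - x.2) * u.1.
set W := (y.1 - x.1) ^+ 2 + (y.2 - x.2) ^+ 2.
have W0 : 0 < W by apply: sqr_sum_gt0; apply: vec_nonzero.
have U0 : 0 < u.1 ^+ 2 + u.2 ^+ 2 by apply: sqr_sum_gt0.
have K2 : K ^+ 2 = W * (u.1 ^+ 2 + u.2 ^+ 2).
  have : K ^+ 2 + (height u y - height u x) ^+ 2 = W * (u.1 ^+ 2 + u.2 ^+ 2).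
    by rewrite /K /W /height; ring.
  by rewrite tie subrr expr0n addr0.
have K0 : K != 0.
  by apply/eqP => K0; move/eqP: K2; rewrite K0 expr0n /= eq_sym mulf_eq0 !gt_eqF.
exists (K / W); first by rewrite mulf_neq0 // invr_eq0 gt_eqF.
move=> z; have E : K * orient x y z = W * (height u z - height u x)
   - ((y.1 - x.1) * (z.1 - x.1) + (y.2 - x.2) * (z.2 - x.2)) * (height u y - height u x).
  by rewrite /K /W /orient /height; ring.
rewrite tie subrr mulr0 subr0 in E.
by rewrite mulrAC E mulrAC mulfV ?gt_eqF // mul1r.
Qed.

Lemma orient0_endpoint P a b z : general_position P ->
  a \in P -> b \in P -> z \in P -> a != b -> orient a b z = 0 -> (z == a) || (z == b).
Proof.
move=> gp aP bP zP ab o0; apply/negPn/negP; rewrite negb_or => /andP [za zb].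
by move: (gp a b z aP bP zP ab); rewrite eq_sym za eq_sym zb o0 eqxx => /(_ isT isT).
Qed.

Lemma tie_unique P u x y z : general_position P -> nonzero u ->
  x \in P -> y \in P -> z \in P -> x != y -> z != x -> z != y ->
  height u y = height u x -> height u z != height u x.
Proof.
move=> gp hu xP yP zP xy zx zy tie; apply/eqP => zx'.
have [s s0 hs] := tie_orient hu xy tie.
have /eqP := hs z; rewrite zx' subrr mulf_eq0 (negbTE s0) /= => /eqP o0.
by have /orP[] := orient0_endpoint gp xP yP zP xy o0; apply/negP.
Qed.

Definition left_count Q a b : nat := count (fun z => 0 < orient a b z) Q.

Lemma right_countE Q a b : count (fun z => orient a b z < 0) Q = left_count Q b a.
Proof. by apply: eq_count => z; rewrite [orient b a z]orient_swap oppr_gt0. Qed.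

Lemma count_sides Q a b : uniq Q -> general_position Q -> a \in Q -> b \in Q -> a != b ->
  (left_count Q a b + left_count Q b a = size Q - 2)%N.
Proof.
move=> uQ gp aQ bQ ab; rewrite -[left_count Q b a]right_countE /left_count.
rewrite -(count_neq2 uQ aQ bQ ab) [RHS](count_andC _ (fun z => 0 < orient a b z)).
congr (_ + _)%N; apply: eq_in_count => z zQ /=.
  case: (eqVneq z a) => [->|za]; first by rewrite orient_first ltxx.
  by case: (eqVneq z b) => [->|zb]; first by rewrite orient_second ltxx.
case: (eqVneq z a) => [->|za]; first by rewrite orient_first ltxx.
case: (eqVneq z b) => [->|zb]; first by rewrite orient_second ltxx.
have := gp a b z aQ bQ zQ ab; rewrite eq_sym za eq_sym zb => /(_ isT isT).
by case: (ltgtP (orient a b z) 0).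
Qed.

Lemma general_position_sub (Q Q' : seq (point R)) : {subset Q' <= Q} -> general_position Q ->
  general_position Q'.
Proof. by move=> sub gp a b c /sub aQ /sub bQ /sub cQ; apply: gp. Qed.

End Directions.

Section Ranks.
Variable R : realFieldType.
Implicit Types (P : seq (point R)) (u x y z a b : point R).

Definition above P u x : nat := count (fun y => height u x < height u y) P.
Definition below P u x : nat := count (fun y => height u y < height u x) P.

Definition generic P u : Prop :=
  forall x y, x \in P -> y \in P -> x != y -> height u x != height u y.

Lemma tie_sides P u x y : nonzero u -> x != y -> height u y = height u x ->
  (left_count P x y = above P u x /\ left_count P y x = below P u x) \/
  (left_count P x y = below P u x /\ left_count P y x = above P u x).
Proof.
move=> hu xy tie; rewrite -[left_count P y x]right_countE /left_count.
have [s s0 hs] := tie_orient hu xy tie.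
case: (ltgtP 0 s) => [sp|sn|s0']; last by move: s0; rewrite -s0' eqxx.
- left; split; apply: eq_count => z.
    by rewrite -(pmulr_rgt0 _ sp) hs subr_gt0.
  by rewrite -(pmulr_rlt0 _ sp) hs subr_lt0.
- right; split; apply: eq_count => z.
    by rewrite -(nmulr_rlt0 _ sn) hs subr_lt0.
  by rewrite -(nmulr_rgt0 _ sn) hs subr_gt0.
Qed.

Lemma above_inj P u : generic P u -> {in P &, injective (above P u)}.
Proof.
move=> gu x z xP zP; apply: contra_eq => xz.
wlog lt_xz : x z xP zP xz / height u x < height u z.
  move=> wl; case: (ltgtP (height u x) (height u z)) => [h|h|e].
  - exact: wl.
  - by rewrite eq_sym wl // eq_sym.
  - by have := gu x z xP zP xz; rewrite e eqxx.
apply/eqP => /esym; apply/eqP; rewrite neq_ltn; apply/orP; left.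
apply: sub_in_count_lt; first by move=> y _; apply: lt_trans.
by exists z => //; rewrite lt_xz ltxx.
Qed.

Definition perturbs P uc u : Prop :=
  forall a b, a \in P -> b \in P -> a != b -> height uc a != height uc b ->
    (height u a < height u b) = (height uc a < height uc b).

Lemma above_untied P uc u x : perturbs P uc u -> x \in P ->
  (forall z, z \in P -> z != x -> height uc z != height uc x) ->
  above P u x = above P uc x.
Proof.
move=> pu xP untied; apply: eq_in_count => z zP /=.
case: (eqVneq z x) => [->|zx]; first by rewrite !ltxx.
by apply: pu => //; rewrite ?(eq_sym x) // eq_sym untied.
Qed.

Lemma above_tied P uc u x y : uniq P -> general_position P -> nonzero uc ->
  perturbs P uc u -> x \in P -> y \in P -> x != y -> height uc y = height uc x ->
  above P u x = ((height u x < height u y)%R + above P uc x)%N.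
Proof.
move=> uP gp nu pu xP yP xy tie.
rewrite /above (count_andC _ (fun z => z == y)); congr (_ + _)%N.
  rewrite -(count_guard1 _ uP yP); apply: eq_count => z /=.
  by case: eqP => [->|]; rewrite ?andbT ?andbF.
apply: eq_in_count => z zP /=.
case: (eqVneq z y) => [->|zy]; first by rewrite tie ltxx andbF.
case: (eqVneq z x) => [->|zx]; first by rewrite !ltxx.
rewrite andbT; apply: pu => //; first by rewrite eq_sym.
by rewrite eq_sym (tie_unique gp nu xP yP zP).
Qed.

Lemma halving_edgeE P m a b : size P = (m + m)%N -> halving_edge P a b =
  [&& a \in P, b \in P, a != b, left_count P a b == (m - 1)%N & left_count P b a == (m - 1)%N].
Proof.
move=> sizeP; rewrite /halving_edge sizeP right_countE.
by have -> : ((m + m - 2) %/ 2 = m - 1)%N by lia.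
Qed.

End Ranks.

Section TopSwap.
Variables (R : realFieldType) (P : seq (point R)) (m : nat).
Hypotheses (uP : uniq P) (gpP : general_position P) (sizeP : size P = (m + m)%N).
Implicit Types (u x y z a b : point R).

Definition top u x : bool := (above P u x < m)%N.

(* The key local fact: when a direction uc is perturbed into u0 and u1, a point
   x that leaves the top m (from u0 to u1) is the m-th highest point for u0, and
   it is swapped with its tie partner y, which enters the top m; since x and y
   are the m-th and (m+1)-th points along the line xy, that line is halving. *)
Lemma top_exit u0 uc u1 x : nonzero uc ->
  perturbs P uc u0 -> perturbs P uc u1 -> generic P u0 -> generic P u1 ->
  x \in P -> top u0 x -> ~~ top u1 x ->
  exists y, [/\ (above P u0 x).+1 = m, top u1 y, ~~ top u0 y & halving_edge P x y].
Proof.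
move=> nu p0 p1 g0 g1 xP t0 t1.
have [y yP /andP [yx /eqP tie]] :
    exists2 y, y \in P & (y != x) && (height uc y == height uc x).
  apply/hasP; apply: contraNT t1 => /hasPn untied.
  have {}untied z : z \in P -> z != x -> height uc z != height uc x.
    by move=> zP zx; have := untied z zP; rewrite zx.
  by move: t0; rewrite /top !(above_untied _ xP untied).
have xy : x != y by rewrite eq_sym.
have ayx : above P uc y = above P uc x by rewrite /above tie.
have ax0 := above_tied uP gpP nu p0 xP yP xy tie.
have ax1 := above_tied uP gpP nu p1 xP yP xy tie.
have ay0 := above_tied uP gpP nu p0 yP xP yx (esym tie).
have ay1 := above_tied uP gpP nu p1 yP xP yx (esym tie).
rewrite ayx in ay0 ay1; move: (g0 x y xP yP xy) (g1 x y xP yP xy) ax0 ax1 ay0 ay1 t0 t1.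
rewrite /top; case: (ltgtP (height u0 x) (height u0 y)) => // h0;
case: (ltgtP (height u1 x) (height u1 y)) => // h1 _ _ ax0 ax1 ay0 ay1 /= t0 t1; try lia.
have aN : (above P uc x = m - 1)%N by lia.
exists y; split; rewrite /top ?ay0 ?ay1 /=; try lia.
have := count_sides uP gpP xP yP xy; rewrite sizeP (halving_edgeE x y sizeP) xP yP xy /=.
by case: (tie_sides P nu xy tie) => -[-> ->]; rewrite aN => ?; apply/andP; split;
  apply/eqP; lia.
Qed.

End TopSwap.

Section Interpolation.
Variable R : realFieldType.
Implicit Types (u a b : point R) (l : R).

Definition lerp u0 u1 l : point R :=
  (u0.1 + l * (u1.1 - u0.1), u0.2 + l * (u1.2 - u0.2)).

Lemma lerp0 u0 u1 : lerp u0 u1 0 = u0.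
Proof. by case: u0 => ? ?; rewrite /lerp !mul0r !addr0. Qed.

Lemma lerp1 u0 u1 : lerp u0 u1 1 = u1.
Proof. by case: u0 => ? ?; case: u1 => ? ?; rewrite /lerp /= !mul1r; congr (_, _); ring. Qed.

Definition hdiff u a b : R := height u b - height u a.

Lemma hdiff_lerp u0 u1 l a b :
  hdiff (lerp u0 u1 l) a b = hdiff u0 a b + l * (hdiff u1 a b - hdiff u0 a b).
Proof. by rewrite /hdiff /height /lerp /=; ring. Qed.

Lemma hdiff_gt0 u a b : (0 < hdiff u a b) = (height u a < height u b).
Proof. exact: subr_gt0. Qed.

Lemma hdiff_eq0 u a b : (hdiff u a b == 0) = (height u a == height u b).
Proof. by rewrite subr_eq0 eq_sym. Qed.

Definition crit u0 u1 a b : R := - hdiff u0 a b / (hdiff u1 a b - hdiff u0 a b).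

Lemma affine_root (A B l0 l : R) : A + l0 * B != 0 -> A + l * B = 0 -> l = - A / B.
Proof.
move=> h0 h; have B0 : B != 0 by by apply: contraNneq h0 => B0; rewrite -h B0 !mulr0.
by apply: (mulIf B0); rewrite divfK //; apply/eqP; rewrite -subr_eq0 opprK addrC h.
Qed.

Lemma affine_sign (A B s t : R) : s < t -> A + s * B != 0 -> A + t * B != 0 ->
  ~~ (s < - A / B < t) -> (0 < A + s * B) = (0 < A + t * B).
Proof.
move=> st hs ht nr; case: (eqVneq B 0) => [->|B0]; first by rewrite !mulr0.
have dl l : A + l * B = B * (l - - A / B) by rewrite mulrBr mulrCA mulfV // mulr1; ring.
rewrite !dl in hs ht *; set r := - A / B in hs ht nr *.
have rs : r != s by apply: contraNneq hs => e; rewrite e subrr mulr0.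
have rt : r != t by apply: contraNneq ht => e; rewrite e subrr mulr0.
case: (ltgtP B 0) => [Bn|Bp|]; last by move/eqP; rewrite (negbTE B0).
- rewrite !nmulr_rgt0 // !subr_lt0.
  case: (ltP s r) => sr; case: (ltP t r) => tr //; last by exfalso; lra.
  by move: nr; rewrite sr (lt_neqAle r t) rt tr.
- rewrite !pmulr_rgt0 // !subr_gt0.
  case: (ltP r s) => sr; case: (ltP r t) => tr //; first by exfalso; lra.
  by move: nr; rewrite (lt_neqAle s r) eq_sym rs sr tr.
Qed.

Lemma exists_avoid (s : seq R) (a b : R) : a < b -> exists t, [/\ a < t, t < b & t \notin s].
Proof.
elim: s b => [|r s IH] b ab; first by exists ((a + b) / 2); split => //; lra.
case: (boolP ((a < r) && (r < b))) => [/andP [ar rb]|hr].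
  have [t [a_t tr ts]] := IH r ar; exists t; split => //; first exact: lt_trans rb.
  by rewrite inE negb_or ts andbT; apply: contraTneq tr => ->; rewrite ltxx.
have [t [a_t tb ts]] := IH b ab; exists t; split => //.
by rewrite inE negb_or ts andbT; apply: contraNneq hr => <-; rewrite a_t.
Qed.

Lemma interval_split (s : seq R) (l0 l1 : R) : l0 < l1 ->
  (exists2 c, l0 < c < l1 & {in s, forall r, l0 < r < l1 -> r = c}) \/
  (exists c1 c2, [/\ c1 \in s, c2 \in s, l0 < c1, c1 < c2 & c2 < l1]).
Proof.
move=> l01; case: (boolP (has (fun r => l0 < r < l1) s)) => [/hasP [c cs lc]|].
  case: (boolP (has (fun r => (l0 < r < l1) && (r != c)) s)).
    move=> /hasP [r rs /andP [/andP [l0r rl1] rc]]; right.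
    move: lc => /andP [l0c cl1]; case: (ltgtP r c) rc => // [rc|cr] _.
      by exists r, c.
    by exists c, r.
  by move=> /hasPn nc; left; exists c => // r /nc; case: eqP => // _; rewrite andbT => /negP.
move=> /hasPn no; left; exists ((l0 + l1) / 2); first by apply/andP; split; lra.
by move=> r /no /negP.
Qed.

End Interpolation.

Section Rotation.
Variable R : realFieldType.
Implicit Types (u : point R).

Definition opp_dir u : point R := (- u.1, - u.2).
Definition perp u : point R := (- u.2, u.1).

Lemma height_opp u z : height (opp_dir u) z = - height u z.
Proof. by rewrite /height /=; ring. Qed.

Lemma nonzero_comb u (s t : R) : nonzero u -> (s != 0) || (t != 0) ->
  nonzero (s * u.1 - t * u.2, s * u.2 + t * u.1).
Proof.
move=> hu hst; rewrite /nonzero /=; apply: contraT => /norP [/negPn/eqP e1 /negPn/eqP e2].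
have := mulr_gt0 (sqr_sum_gt0 hst) (sqr_sum_gt0 hu).
have -> : (s ^+ 2 + t ^+ 2) * (u.1 ^+ 2 + u.2 ^+ 2) =
  (s * u.1 - t * u.2) ^+ 2 + (s * u.2 + t * u.1) ^+ 2 by ring.
by rewrite e1 e2 expr0n addr0 ltxx.
Qed.

Lemma perp_separating u x y : nonzero u -> x != y ->
  (hdiff u x y != 0) || (hdiff (perp u) x y != 0).
Proof.
move=> hu xy; apply: contraT => /norP [/negPn/eqP h1 /negPn/eqP h2].
have := mulr_gt0 (sqr_sum_gt0 hu) (sqr_sum_gt0 (vec_nonzero xy)).
have -> : (u.1 ^+ 2 + u.2 ^+ 2) * ((vec x y).1 ^+ 2 + (vec x y).2 ^+ 2) =
  hdiff u x y ^+ 2 + hdiff (perp u) x y ^+ 2 by rewrite /hdiff /height /vec /=; ring.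
by rewrite h1 h2 expr0n addr0 ltxx.
Qed.

End Rotation.

Section TopCount.
Variables (R : realFieldType) (P V : seq (point R)) (m : nat).
Hypotheses (uP : uniq P) (gpP : general_position P) (sizeP : size P = (m + m)%N).
Hypotheses (uV : uniq V) (subVP : {subset V <= P}).
Hypothesis closedV : forall a b, a \in V -> halving_edge P a b -> b \in V.
Implicit Types (u x y : point R).

Definition top_count u : nat := count (top P m u) V.

(* At most one point of V leaves the top m under a perturbation, and if one
   does, its halving partner, which lies in V as well, enters it. *)
Lemma exits_le_entries u0 uc u1 : nonzero uc ->
  perturbs P uc u0 -> perturbs P uc u1 -> generic P u0 -> generic P u1 ->
  (count (fun x => top P m u0 x && ~~ top P m u1 x) V <=
   count (fun x => top P m u1 x && ~~ top P m u0 x) V)%N.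
Proof.
move=> nu p0 p1 g0 g1.
case: (posnP (count (fun x => top P m u0 x && ~~ top P m u1 x) V)) => [-> //|].
rewrite -has_count => /hasP [x xV /andP [t0 t1]].
have [y [_ ty1 ty0 xy]] := top_exit uP gpP sizeP nu p0 p1 g0 g1 (subVP xV) t0 t1.
apply: (@leq_trans 1).
  apply: count_le1 => // z z' zV z'V /andP [s0 s1] /andP [s0' s1'].
  have [? [e _ _ _]] := top_exit uP gpP sizeP nu p0 p1 g0 g1 (subVP zV) s0 s1.
  have [? [e' _ _ _]] := top_exit uP gpP sizeP nu p0 p1 g0 g1 (subVP z'V) s0' s1'.
  apply: (above_inj g0 (subVP zV) (subVP z'V)).
  by apply/eqP; rewrite -eqSS e e'.
by rewrite -has_count; apply/hasP; exists y; rewrite ?ty1 ?ty0 // (closedV xV xy).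
Qed.

Lemma top_count_perturb u0 uc u1 : nonzero uc ->
  perturbs P uc u0 -> perturbs P uc u1 -> generic P u0 -> generic P u1 ->
  top_count u0 = top_count u1.
Proof.
move=> nu p0 p1 g0 g1; rewrite /top_count (count_andC _ (top P m u1)).
rewrite [RHS](count_andC _ (top P m u0)); congr (_ + _)%N.
  by apply: eq_count => x; rewrite andbC.
by apply/eqP; rewrite eqn_leq !(exits_le_entries nu).
Qed.

Section Segment.
Variables u0 u1 : point R.
Hypothesis nonzero_segment : forall l, 0 <= l -> l <= 1 -> nonzero (lerp u0 u1 l).

Definition crits : seq R := [seq crit u0 u1 a b | a <- P, b <- P].

Definition separating_segment : Prop := forall a b, a \in P -> b \in P -> a != b ->
  (hdiff u0 a b != 0) || (hdiff u1 a b != 0).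

Lemma separating_of_generic l : generic P (lerp u0 u1 l) -> separating_segment.
Proof.
move=> gl a b aP bP ab; have := gl a b aP bP ab; rewrite -hdiff_eq0 hdiff_lerp.
by apply: contraNT; rewrite negb_or !negbK => /andP [/eqP -> /eqP ->]; rewrite subrr mulr0 addr0.
Qed.

Lemma generic_lerp l : separating_segment -> l \notin crits -> generic P (lerp u0 u1 l).
Proof.
move=> sep lC a b aP bP ab; apply: contra lC; rewrite -hdiff_eq0 hdiff_lerp => /eqP e.
have h01 : hdiff u0 a b + 0 * (hdiff u1 a b - hdiff u0 a b) != 0 \/
           hdiff u0 a b + 1 * (hdiff u1 a b - hdiff u0 a b) != 0.
  by rewrite mul0r addr0 mul1r addrC subrK; apply/orP; exact: sep.
have -> : l = crit u0 u1 a b by case: h01 => h; rewrite (affine_root h e).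
exact: allpairs_f.
Qed.

Lemma perturbs_lerp c l : generic P (lerp u0 u1 l) ->
  {in crits, forall r, ~~ (l < r < c) && ~~ (c < r < l)} ->
  perturbs P (lerp u0 u1 c) (lerp u0 u1 l).
Proof.
move=> gl nc a b aP bP ab; rewrite -hdiff_eq0 => tc.
have := gl a b aP bP ab; rewrite -hdiff_eq0 => tl.
have /andP [nlc ncl] := nc _ (allpairs_f (crit u0 u1) aP bP); rewrite /crit in nlc ncl.
rewrite -!hdiff_gt0 !hdiff_lerp; rewrite hdiff_lerp in tc; rewrite hdiff_lerp in tl.
case: (ltgtP l c) => [lc|cl|-> //]; first exact: affine_sign.
exact/esym/affine_sign.
Qed.

(* If all critical parameters between l0 and l1 coincide, the count is the
   same at both ends: both are perturbations of the direction at that point. *)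
Lemma top_count_base l0 c l1 : 0 <= l0 -> l0 < c -> c < l1 -> l1 <= 1 ->
  generic P (lerp u0 u1 l0) -> generic P (lerp u0 u1 l1) ->
  {in crits, forall r, l0 < r < l1 -> r = c} ->
  top_count (lerp u0 u1 l0) = top_count (lerp u0 u1 l1).
Proof.
move=> h0 l0c cl1 h1 g0 g1 only; apply: (top_count_perturb (uc := lerp u0 u1 c)).
- by apply: nonzero_segment; lra.
- apply: perturbs_lerp => // r rC; apply/andP; split; apply/negP => /andP [? ?]; last lra.
  have : r = c by apply: (only r rC); apply/andP; split; lra.
  lra.
- apply: perturbs_lerp => // r rC; apply/andP; split; apply/negP => /andP [? ?]; first lra.
  have : r = c by apply: (only r rC); apply/andP; split; lra.
  lra.
- exact: g0.
- exact: g1.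
Qed.

(* Induction on the number of critical parameters between l0 and l1: if two
   distinct ones occur, cut the interval at a noncritical parameter between them. *)
Lemma top_count_interval n l0 l1 : 0 <= l0 -> l0 < l1 -> l1 <= 1 ->
  generic P (lerp u0 u1 l0) -> generic P (lerp u0 u1 l1) ->
  (count (fun r => (l0 < r < l1)%R) crits <= n)%N ->
  top_count (lerp u0 u1 l0) = top_count (lerp u0 u1 l1).
Proof.
elim: n l0 l1 => [|n IH] l0 l1 h0 l01 h1 g0 g1 cnt;
  case: (interval_split crits l01) => [[c /andP [l0c cl1] only] | [c1 [c2 [c1C c2C l0c1 c12 c2l1]]]];
  try exact: (top_count_base h0 l0c cl1).
  suff : (0 < count (fun r => (l0 < r < l1)%R) crits)%N by lia.
  by rewrite -has_count; apply/hasP; exists c1 => //; lra.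
have [t [c1t tc2 tC]] := exists_avoid crits c12.
have gt := generic_lerp (separating_of_generic g0) tC.
have shorter (a b : R) w : w \in crits -> l0 < w < l1 -> ~~ (a < w < b) ->
    l0 <= a -> b <= l1 -> (count (fun r => (a < r < b)%R) crits <= n)%N.
  move=> wC wl nw la bl; rewrite -ltnS; apply: leq_trans cnt.
  apply: sub_in_count_lt; last by exists w; rewrite ?wl.
  by move=> r _; lra.
have left : (count (fun r => (l0 < r < t)%R) crits <= n)%N.
  by apply: (shorter _ _ c2) => //; lra.
have right : (count (fun r => (t < r < l1)%R) crits <= n)%N.
  by apply: (shorter _ _ c1) => //; lra.
by rewrite (IH l0 t) ?(IH t l1) //; lra.
Qed.

Lemma top_count_segment : generic P u0 -> generic P u1 -> top_count u0 = top_count u1.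
Proof.
move=> g0 g1; have := @top_count_interval (size crits) 0 1 (lexx 0) ltr01 (lexx 1).
by rewrite lerp0 lerp1; apply => //; apply: count_size.
Qed.

End Segment.

Lemma top_opp u x : generic P u -> x \in P -> top P m (opp_dir u) x = ~~ top P m u x.
Proof.
move=> gu xP; rewrite /top.
have -> : above P (opp_dir u) x = below P u x.
  by apply: eq_count => y; rewrite !height_opp ltrN2.
have : (below P u x + above P u x)%N = (size P - 1)%N.
  have := count_predC (pred1 x) P; rewrite (count_uniq_mem x uP) xP.
  rewrite (count_andC _ (fun y => height u y < height u x)) /below /above.
  have -> : count (fun y => predC (pred1 x) y && (height u y < height u x)) P =
            count (fun y => height u y < height u x) P.
    by apply: eq_count => y /=; case: eqP => [->|]; rewrite ?ltxx.
  have -> : count (fun y => predC (pred1 x) y && ~~ (height u y < height u x)) P =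
            count (fun y => height u x < height u y) P.
    apply: eq_in_count => y yP /=; case: (eqVneq y x) => [->|yx]; first by rewrite ltxx.
    by have := gu x y xP yP; rewrite eq_sym yx; case: ltgtP => // _ /(_ isT).
  by move=> <-; rewrite /= add1n subn1.
by have := mem_size_gt0 xP; rewrite sizeP; lia.
Qed.

Lemma top_count_opp u : generic P u -> (top_count (opp_dir u) + top_count u = size V)%N.
Proof.
move=> gu; rewrite /top_count -(count_predC (top P m u) V) addnC; congr (_ + _)%N.
by apply: eq_in_count => x xV; rewrite top_opp ?subVP.
Qed.

(* Opposite directions are joined by two segments of nonzero directions
   through a separating direction w between u and its quarter turn. *)
Lemma top_count_antipodal u : nonzero u -> generic P u ->
  top_count (opp_dir u) = top_count u.
Proof.
move=> nu gu.
have sep : separating_segment u (perp u).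
  by move=> a b aP bP ab; rewrite hdiff_eq0 gu.
have [t [t0 t1 tC]] := exists_avoid (crits u (perp u)) ltr01.
set w := lerp u (perp u) t.
have gw : generic P w := generic_lerp sep tC.
have gopp : generic P (opp_dir u).
  by move=> a b aP bP ab; rewrite !height_opp eqr_opp gu.
have -> : top_count u = top_count w.
  apply: top_count_segment => // l l0 l1.
  have -> : lerp u w l = ((1 - l * t) * u.1 - (l * t) * u.2, (1 - l * t) * u.2 + (l * t) * u.1).
    by rewrite /w /lerp /perp /=; congr (_, _); ring.
  apply: nonzero_comb => //; case: (eqVneq l 0) => [->|l0']; first by rewrite mul0r subr0 oner_neq0.
  by rewrite mulf_neq0 ?orbT // gt_eqF.
apply/esym/top_count_segment => // l l0 l1.
have -> : lerp w (opp_dir u) l = (((1 - l) * (1 - t) - l) * u.1 - ((1 - l) * t) * u.2,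
                                 ((1 - l) * (1 - t) - l) * u.2 + ((1 - l) * t) * u.1).
  by rewrite /w /lerp /perp /opp_dir /=; congr (_, _); ring.
apply: nonzero_comb => //; case: (eqVneq l 1) => [->|l1'].
  by rewrite subrr !mul0r sub0r oppr_eq0 oner_neq0.
have ht : t != 0 by rewrite gt_eqF.
by rewrite mulf_neq0 ?orbT // subr_eq0 eq_sym.
Qed.

Lemma top_count_half u : nonzero u -> generic P u -> size V = (top_count u + top_count u)%N.
Proof. by move=> nu gu; rewrite -{1}(top_count_antipodal nu gu) top_count_opp. Qed.

End TopCount.

Section EdgeDirection.
Variable R : realFieldType.
Implicit Types (u a b x z : point R).

Lemma nonzero_of_height u a b : height u a != height u b -> nonzero u.
Proof.
by apply: contraNT; rewrite /nonzero negb_or !negbK /height => /andP [/eqP -> /eqP ->];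
  rewrite !mul0r addr0.
Qed.

Lemma small_perturbation_sign (o Y e : R) : 0 < e -> e * (`|o| + `|Y|) < `|o| ->
  (0 < o -> 0 < o + e * (Y - o)) /\ (o < 0 -> o + e * (Y - o) < 0).
Proof.
move=> e0 small; have hY := ler_norm Y; have := ler_norm (- Y); rewrite normrN => hY'.
have eY : e * Y <= e * `|Y| by apply: ler_wpM2l; [exact: ltW | exact: hY].
have eY' : e * (- `|Y|) <= e * Y by apply: ler_wpM2l; [exact: ltW | rewrite lerNl].
rewrite mulrN in eY'; rewrite mulrBr.
by split => ho; move: small; rewrite ?(gtr0_norm ho) ?(ltr0_norm ho) mulrDr ?mulrN => small; lra.
Qed.

Lemma uniformly_small (T : eqType) (s : seq T) (o X : T -> R) : (forall t, 0 <= X t) ->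
  exists2 d : R, 0 < d & {in s, forall t, o t != 0 -> d * X t < `|o t|}.
Proof.
move=> X0; elim: s => [|r s [d d0 hd]]; first by exists 1.
case: (eqVneq (o r) 0) => [or0|or0].
  by exists d => // t; rewrite inE => /predU1P [->|/hd //]; rewrite or0 eqxx.
have Xr := X0 r; have or_gt0 : 0 < `|o r| by rewrite normr_gt0.
set dr := `|o r| / (X r + 1).
have dr0 : 0 < dr by apply: divr_gt0 => //; lra.
have drX : dr * X r < `|o r|.
  have : dr * (X r + 1) = `|o r| by rewrite /dr divfK // gt_eqF //; lra.
  by rewrite mulrDr mulr1 => e; lra.
exists (Order.min d dr); first by rewrite lt_min d0 dr0.
move=> t; rewrite inE => /predU1P [-> _|ts ot].
  by apply: le_lt_trans drX; apply: ler_wpM2r => //; rewrite ge_min lexx orbT.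
by apply: le_lt_trans (hd t ts ot); apply: ler_wpM2r => //; rewrite ge_min lexx.
Qed.

(* For an edge ab of P there is a separating direction in which a lies just
   below b, the points left of ab above both and those right of ab below both:
   a small perturbation of the normal of ab towards ab. *)
Lemma edge_direction P a b : a \in P -> b \in P -> a != b ->
  exists u, [/\ nonzero u, generic P u, height u a < height u b,
    {in P, forall z, 0 < orient a b z -> height u b < height u z} &
    {in P, forall z, orient a b z < 0 -> height u z < height u a}].
Proof.
move=> aP bP ab; set v := vec a b; set w := perp v.
have hw x z : hdiff w x z = orient a b z - orient a b x.
  by rewrite /hdiff /height /w /perp /v /vec /orient /=; ring.
have vab : 0 < hdiff v a b.
  have -> : hdiff v a b = v.1 ^+ 2 + v.2 ^+ 2 by rewrite /hdiff /height /v /vec /=; ring.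
  exact/sqr_sum_gt0/vec_nonzero.
have sep : separating_segment P w v.
  by move=> x y _ _ xy; rewrite orbC; apply: perp_separating => //; apply: vec_nonzero.
pose X : point R -> R := fun z => `|orient a b z| + `|hdiff v a z| + `|hdiff v b z|.
have [d d0 hd] := @uniformly_small _ P (orient a b) X (fun z => addr_ge0 (addr_ge0
  (normr_ge0 _) (normr_ge0 _)) (normr_ge0 _)).
have [e [e0 ed eC]] := exists_avoid (crits P w v) d0.
set u := lerp w v e.
have hu x z : hdiff u x z =
    (orient a b z - orient a b x) + e * (hdiff v x z - (orient a b z - orient a b x)).
  by rewrite hdiff_lerp !hw.
have small z : z \in P -> orient a b z != 0 ->
    e * (`|orient a b z| + `|hdiff v a z|) < `|orient a b z| /\
    e * (`|orient a b z| + `|hdiff v b z|) < `|orient a b z|.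
  move=> zP oz; have := hd z zP oz.
  have := normr_ge0 (orient a b z); have := normr_ge0 (hdiff v a z).
  have := normr_ge0 (hdiff v b z) => nb na no hX.
  have eX : e * X z <= d * X z by apply: ler_wpM2r; [rewrite /X; lra | exact: ltW].
  have ea : e * (`|orient a b z| + `|hdiff v a z|) <= e * X z.
    by apply: ler_wpM2l; [exact: ltW | rewrite /X; lra].
  have eb : e * (`|orient a b z| + `|hdiff v b z|) <= e * X z.
    by apply: ler_wpM2l; [exact: ltW | rewrite /X; lra].
  split; lra.
have ltab : height u a < height u b.
  by rewrite -hdiff_gt0 hu orient_first orient_second subrr add0r subr0 mulr_gt0.
exists u; split => //.
- by apply: (nonzero_of_height (a := a) (b := b)); rewrite lt_eqF.
- exact: generic_lerp sep eC.
- move=> z zP oz; rewrite -hdiff_gt0 hu orient_second subr0.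
  by apply: (small_perturbation_sign e0 (small z zP (lt0r_neq0 oz)).2).1.
- move=> z zP oz; rewrite -subr_lt0 -/(hdiff u a z) hu orient_first subr0.
  by apply: (small_perturbation_sign e0 (small z zP (ltr0_neq0 oz)).1).2.
Qed.

Lemma exists_generic_direction (P : seq (point R)) :
  uniq P -> (1 < size P)%N -> exists u, nonzero u /\ generic P u.
Proof.
case: P => [|a [|b P]] //= /andP [abP _] _.
have ab : a != b by apply: contraNneq abP => ->; apply: mem_head.
have bP : b \in [:: a, b & P] by rewrite !inE eqxx orbT.
by have [u [nu gu _ _ _]] := edge_direction (mem_head a _) bP ab; exists u.
Qed.

End EdgeDirection.

Section EdgeRanks.
Variables (R : realFieldType) (P : seq (point R)) (a b u : point R).
Hypotheses (gpP : general_position P) (aP : a \in P) (bP : b \in P) (ab : a != b).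
Hypothesis below_ab : height u a < height u b.
Hypothesis left_up : {in P, forall z, 0 < orient a b z -> height u b < height u z}.
Hypothesis right_down : {in P, forall z, orient a b z < 0 -> height u z < height u a}.

Lemma above_left x : x \in P -> 0 < orient a b x -> (above P u x < left_count P a b)%N.
Proof.
move=> xP lx; have bx := left_up xP lx.
apply: sub_in_count_lt; last by exists x => //=; rewrite lx ltxx.
move=> y yP xy; case: (ltgtP (orient a b y) 0) => [/(right_down yP) ya|//|].
  by have := lt_trans (lt_trans (lt_trans bx xy) ya) below_ab; rewrite ltxx.
move/(orient0_endpoint gpP aP bP yP ab)/orP => [] /eqP e; rewrite e in xy.
  by have := lt_trans (lt_trans bx xy) below_ab; rewrite ltxx.
by have := lt_trans bx xy; rewrite ltxx.
Qed.

Lemma above_b : above P u b = left_count P a b.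
Proof.
apply: eq_in_count => y yP; case: (ltgtP (orient a b y) 0) => [ry|/(left_up yP)->//|].
  by apply/negbTE; rewrite -leNgt ltW // (lt_trans (right_down yP ry)).
move/(orient0_endpoint gpP aP bP yP ab)/orP => [] /eqP ->; last by rewrite ltxx.
by apply/negbTE; rewrite -leNgt ltW.
Qed.

Lemma above_nonleft x : x \in P -> x != b -> ~~ (0 < orient a b x) ->
  (left_count P a b < above P u x)%N.
Proof.
move=> xP xb nlx; have xb' : height u x < height u b.
  case: (ltgtP (orient a b x) 0) => [/(right_down xP) xa|lx|].
  - exact: lt_trans below_ab.
  - by rewrite lx in nlx.
  move/(orient0_endpoint gpP aP bP xP ab)/orP => [] /eqP e; first by rewrite e.
  by rewrite e eqxx in xb.
apply: sub_in_count_lt; last by exists b => //=; rewrite xb' orient_second ltxx.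
by move=> y yP /(left_up yP); apply: lt_trans.
Qed.

End EdgeRanks.

Section Component.
Variables (R : realFieldType) (P V : seq (point R)) (m k : nat).
Hypotheses (uP : uniq P) (gpP : general_position P) (sizeP : size P = (m + m)%N).
Hypotheses (uV : uniq V) (subVP : {subset V <= P}) (sizeV : size V = (k + k)%N).
Hypothesis closedV : forall a b, a \in V -> halving_edge P a b -> b \in V.
Implicit Types (u a b : point R).

Lemma top_count_eq u : nonzero u -> generic P u -> top_count P V m u = k.
Proof.
by move=> nu gu; have := top_count_half uP gpP sizeP uV subVP closedV nu gu; lia.
Qed.

(* Comparing the top m of a direction adapted to the edge ab with the side
   counts: if m - 1 points of P lie left of ab then k - 1 points of V do, and
   if at least m points of P lie left of ab then at least k points of V do. *)
Lemma left_counts a b : a \in V -> b \in V -> a != b ->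
  (left_count P a b = m - 1 -> left_count V a b = k - 1)%N /\
  (m <= left_count P a b -> k <= left_count V a b)%N.
Proof.
move=> aV bV ab; have aP := subVP aV; have bP := subVP bV.
have [u [nu gu ab_u lu rd]] := edge_direction aP bP ab.
have Ab := above_b gpP aP bP ab ab_u lu rd.
have Al := above_left gpP aP bP ab ab_u lu rd.
have An := above_nonleft gpP aP bP ab ab_u lu rd.
have <- := top_count_eq nu gu; rewrite /top_count /top; split => hP.
  have := mem_size_gt0 aP; rewrite sizeP => m0.
  have -> : count (fun x => above P u x < m)%N V =
            count (fun x => (0 < orient a b x) || (x == b)) V.
    apply: eq_in_count => x /subVP xP; case: (boolP (0 < orient a b x)) => [lx|nlx] /=.
      by have := Al x xP lx; lia.
    by case: (eqVneq x b) => [->|xb]; [rewrite Ab; lia | have := An x xP xb nlx; lia].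
  by rewrite /left_count (count_or1 uV bV) ?orient_second ?ltxx // subn1.
apply: sub_in_count => x /subVP xP; apply: contraTT => nlx.
case: (eqVneq x b) => [->|xb]; first by rewrite Ab -leqNgt.
by have := An x xP xb nlx; lia.
Qed.

Lemma halving_component a b : a \in V -> b \in V -> halving_edge V a b = halving_edge P a b.
Proof.
move=> aV bV; case: (eqVneq a b) => [<-|ab]; first by rewrite /halving_edge eqxx !andbF.
have aP := subVP aV; have bP := subVP bV; have ba : b != a by rewrite eq_sym.
have gpV := general_position_sub subVP gpP.
have := count_sides uP gpP aP bP ab; have := count_sides uV gpV aV bV ab.
have [ablP ablV] := left_counts aV bV ab; have [balP balV] := left_counts bV aV ba.
have := mem_size_gt0 aV.
rewrite (halving_edgeE a b sizeV) (halving_edgeE a b sizeP) aV bV aP bP ab sizeV sizeP /=.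
move=> V0 sidesV sidesP.
by apply/andP/andP => -[/eqP hl /eqP hr]; split; apply/eqP; lia.
Qed.

End Component.

Section Reachability.
Variables (R : realFieldType) (P : seq (point R)).

Lemma reachable_step v a b : reachable P v a -> halving_edge P a b -> reachable P v b.
Proof.
move=> [p [hp <-]] ab; exists (rcons p b); split; last by rewrite last_rcons.
by rewrite rcons_path hp.
Qed.

End Reachability.

Unset Implicit Arguments.

Theorem mainTheorem6 (R : realFieldType) (P : seq (point R))
  (huniq : uniq P) (hgp : general_position P) (heven : ~~ odd (size P))
  (v : point R) (hv : v \in P) (V : seq (point R)) (huniqV : uniq V)
  (hV : forall w, w \in V <-> (w \in P /\ reachable P v w)) :
  ~~ odd (size V) /\
  (forall a b : point R,
     halving_edge V a b = [&& halving_edge P a b, a \in V & b \in V]).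
Proof.
have subVP : {subset V <= P} by move=> x /hV [].
have closedV a b : a \in V -> halving_edge P a b -> b \in V.
  move=> /hV [_ va] ab; apply/hV; split; first by case/and3P: ab.
  exact: reachable_step va ab.
have [m sizeP] : exists m, size P = (m + m)%N.
  by exists (size P)./2; rewrite addnn -[LHS](odd_double_half (size P)) (negbTE heven).
have [u [nu gu]] : exists u, nonzero u /\ generic P u.
  by apply: exists_generic_direction huniq _; have := mem_size_gt0 hv; rewrite sizeP; lia.
have sizeV := top_count_half huniq hgp sizeP huniqV subVP closedV nu gu.
split; first by rewrite sizeV addnn odd_double.
move=> a b; apply/idP/idP => [hVab | /and3P [hPab aV bV]].
  have /and3P [aV bV _] := hVab.
  by rewrite -(halving_component huniq hgp sizeP huniqV subVP sizeV closedV aV bV) hVab aV bV.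
by rewrite (halving_component huniq hgp sizeP huniqV subVP sizeV closedV aV bV).
Qed.
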